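(* Let $G$ be a graph with no massive edges and let $X=\{x_1,x_2,x_3,x_4\}\subseteq V(G)$ be the set of vertices with external momenta, all on-shell. Suppose $G$ has a $1$-separation $(A,B)$ with $A\cap B=\{v\}$, $X\cap(A\setminus\{v\})=\{x_1,x_2\}$ and $X\cap(B\setminus\{v\})=\{x_3,x_4\}$. Let $A'$ be $G[A]$ with the same external momenta and Schwinger parameters as in $G$ except that the momentum at $v$ is $\rho_{x_3}+\rho_{x_4}$, and let $B'$ be $G[B]$ with the same data as in $G$ except that the momentum at $v$ is $\rho_{x_1}+\rho_{x_2}$. Then $\phi_G=\phi_{A'}\psi_{B'}+\phi_{B'}\psi_{A'}$.
   Context: A $1$-separation is a pair $(A,B)$ with $A\cup B=V(G)$, $|A\cap B|\le1$ and no edge between $A\setminus B$ and $B\setminus A$. Each edge $e$ has a variable $\alpha_e$ and a mass $m_e$ (massive if $m_e\neq0$); each vertex $u$ has $\rho_u\in\mathbb{R}^4$, zero outside $X$, with $\sum_u\rho_u=0$. $\rho^2=\rho_1^2+\rho_2^2+\rho_3^2-\rho_4^2$ and $\rho_u$ is on-shell if $\rho_u^2=0$. $\psi_G=\sum_T\prod_{e\notin E(T)}\alpha_e$ over spanning trees $T$. A spanning 2-forest is an unordered pair $(T_1,T_2)$ of vertex-disjoint trees covering $V(G)$; $\rho^{H}=\sum_{u\in V(H)}\rho_u$; $\phi_G=\sum_{(T_1,T_2)}(\rho^{T_1})^2\prod_{e\notin E(T_1)\cup E(T_2)}\alpha_e+\psi_G\sum_e\alpha_em_e^2$. *)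

From HB Require Import structures.
From mathcomp Require Import all_boot all_order all_algebra.
Set Implicit Arguments. Unset Strict Implicit. Unset Printing Implicit Defensive.
Import Order.TTheory GRing.Theory Num.Theory.
Local Open Scope ring_scope.

(* Subgraphs are induced subgraphs G[A] for A : {set V}; G itself is G[setT]. *)
Section GraphPolys.
Variables (V E : finType) (ends : E -> V * V).

Definition adj (F : {set E}) : rel V := fun x y =>
  [exists e in F, (((ends e).1 == x) && ((ends e).2 == y))
                || (((ends e).1 == y) && ((ends e).2 == x))].

Definition induced_edges (A : {set V}) : {set E} :=
  [set e | ((ends e).1 \in A) && ((ends e).2 \in A)].

Definition acyclic (F : {set E}) : bool :=
  [forall e in F, ~~ connect (adj (F :\ e)) (ends e).1 (ends e).2].

Definition tree_on (S : {set V}) (T : {set E}) : bool :=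
  [&& S != set0, T \subset induced_edges S, acyclic T &
      [forall x in S, forall y in S, connect (adj T) x y]].

Definition spanning_tree (A : {set V}) (T : {set E}) : bool := tree_on A T.

(* ordered spanning 2-forest (T1,T2) of G[A], with V(T1) = S, V(T2) = A \ S,
   encoded by S and the edge set F = E(T1) u E(T2) *)
Definition two_forest (A S : {set V}) (F : {set E}) : bool :=
  [&& S \subset A,
      F \subset induced_edges S :|: induced_edges (A :\: S),
      tree_on S (F :&: induced_edges S) &
      tree_on (A :\: S) (F :&: induced_edges (A :\: S))].

Variable R : realFieldType.

Definition msq (r : 'rV[R]_4) : R :=
  r ord0 (0 : 'I_4) ^+ 2 + r ord0 (1 : 'I_4) ^+ 2 + r ord0 (2 : 'I_4) ^+ 2
  - r ord0 (3 : 'I_4) ^+ 2.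

Definition mom (rho : V -> 'rV[R]_4) (S : {set V}) : 'rV[R]_4 :=
  \sum_(u in S) rho u.

Definition psi (A : {set V}) (alpha : E -> R) : R :=
  \sum_(T : {set E} | spanning_tree A T)
     \prod_(e in induced_edges A :\: T) alpha e.

(* second Symanzik polynomial of G[A], evaluated at alpha.
   The sum over unordered spanning 2-forests {T1,T2} is written as half the
   sum over ordered pairs (T1,T2). *)
Definition phi (A : {set V}) (rho : V -> 'rV[R]_4) (alpha m : E -> R) : R :=
  2^-1 * (\sum_(S : {set V}) \sum_(F : {set E} | two_forest A S F)
            msq (mom rho S) * \prod_(e in induced_edges A :\: F) alpha e)
  + psi A alpha * \sum_(e in induced_edges A) alpha e * m e ^+ 2.

End GraphPolys.

Definition one_separation (V E : finType) (ends : E -> V * V) (A B : {set V}) : bool :=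
  (A :|: B == setT) && (#|A :&: B| <= 1)%N &&
  [forall e : E, ~~ ((((ends e).1 \in A :\: B) && ((ends e).2 \in B :\: A))
                  || (((ends e).1 \in B :\: A) && ((ends e).2 \in A :\: B)))].

(* A cut vertex splits every spanning tree of G into spanning trees of G[A] and G[B]
   (acyclicity and connectivity both glue across v).  Hence an ordered spanning
   2-forest (T1, T2) of G has its cut on exactly one side: it restricts, say, to a
   spanning 2-forest of G[A] and a spanning tree of G[B], and G[B] hangs off the
   tree containing v.  This is a bijection, the monomial in the Schwinger
   parameters factorises, and the momentum of the tree containing v equals that of
   its part in G[A] once rho_v is replaced by the total momentum of G[B], which is
   rho_x3 + rho_x4.  Without masses the second term of phi vanishes. *)

From HB Require Import structures.
From mathcomp Require Import all_boot all_order all_algebra.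
Import Order.TTheory GRing.Theory Num.Theory.
Set Implicit Arguments. Unset Strict Implicit. Unset Printing Implicit Defensive.
Local Open Scope ring_scope.

(* Closes set-membership bookkeeping goals by case analysis on every [_ \in _]. *)
Ltac case_mem := rewrite /induced_edges ?inE;
  repeat match goal with |- context[?x \in ?X] => case: (x \in X) end;
  try (intros; simpl in *;
    repeat match goal with H : is_true true -> _ |- _ => specialize (H isT) end;
    match goal with H : is_true false |- _ => discriminate H | _ => done end).

Lemma connect_invariant (T : finType) (e : rel T) (P : T -> Prop) x y :
  P x -> (forall a b, P a -> e a b -> P b) -> connect e x y -> P y.
Proof.
move=> Px step /connectP[p + ->]; elim: p x Px => //= z p IHp x Px /andP[exz pz].
exact: IHp (step _ _ Px exz) pz.
Qed.

Section Graph.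
Variables (V E : finType) (ends : E -> V * V).
Local Notation IE := (induced_edges ends).
Local Notation adj := (adj ends).

Lemma adjP (F : {set E}) a b : reflect (exists2 e, e \in F &
    ((ends e).1 = a /\ (ends e).2 = b) \/ ((ends e).1 = b /\ (ends e).2 = a))
  (adj F a b).
Proof.
apply: (iffP existsP) => [[e /andP[eF /orP[]/andP[/eqP h1 /eqP h2]]]|].
- by exists e => //; left.
- by exists e => //; right.
by case=> e eF [][h1 h2]; exists e; rewrite eF h1 h2 !eqxx ?orbT.
Qed.

Lemma connect_adj_mono (F F' : {set E}) x y :
  F \subset F' -> connect (adj F) x y -> connect (adj F') x y.
Proof.
move=> /subsetP sFF'; apply: connect_sub => a b /adjP[e eF H].
by apply: connect1; apply/adjP; exists e; first exact: sFF'.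
Qed.

Lemma connect_adj_induced (F : {set E}) (C : {set V}) x y :
  F \subset IE C -> x \in C -> connect (adj F) x y -> y \in C.
Proof.
move=> /subsetP sFC xC; apply: (connect_invariant (P := fun z => z \in C)) => //.
by move=> a b _ /adjP[e /sFC]; rewrite inE => /andP[e1C e2C] [[_ <-]|[<- _]].
Qed.

Lemma induced_edges_mono (S S' : {set V}) : S \subset S' -> IE S \subset IE S'.
Proof.
by move=> /subsetP sSS'; apply/subsetP => e; rewrite !inE => /andP[/sSS' -> /sSS'].
Qed.

Lemma two_forest_compl (W S : {set V}) (F : {set E}) :
  two_forest ends W S F -> two_forest ends W (W :\: S) F.
Proof.
case/and4P=> sSW sF t1 t2.
have WWS : W :\: (W :\: S) = S by rewrite setDDr setDv set0U; apply/setIidPr.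
by apply/and4P; split; rewrite ?subsetDl ?WWS // setUC.
Qed.

Lemma two_forest_sub (W S : {set V}) (F : {set E}) :
  two_forest ends W S F -> S \subset W /\ F \subset IE W.
Proof.
case/and4P=> sSW sF _ _; split=> //; apply: subset_trans sF _.
by rewrite subUset !induced_edges_mono ?subsetDl.
Qed.

Lemma one_separation_cover (A B : {set V}) :
  one_separation ends A B -> forall e, e \in IE A :|: IE B.
Proof.
case/andP=> /andP[/eqP AUB _] /forallP sep e.
have memAB x : (x \in A) || (x \in B) by rewrite -in_setU AUB inE.
by move: (sep e) (memAB (ends e).1) (memAB (ends e).2); case_mem.
Qed.

Lemma induced_edges_cut_disjoint (A B : {set V}) (v : V) :
  (forall e, (ends e).1 != (ends e).2) -> A :&: B = [set v] ->
  forall e, ~~ ((e \in IE A) && (e \in IE B)).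
Proof.
move=> loopless AIB e; rewrite !inE; apply/negP => /andP[/andP[e1A e2A] /andP[e1B e2B]].
have cut x : x \in A -> x \in B -> x = v by move=> xA xB; apply/set1P; rewrite -AIB inE xA.
by move: (loopless e); rewrite (cut _ e1A e1B) (cut _ e2A e2B) eqxx.
Qed.

Lemma connect_adj_cut (A B : {set V}) (v : V) (FA FB : {set E}) x y :
    A :&: B \subset [set v] -> FA \subset IE A -> FB \subset IE B -> x \in A ->
    connect (adj (FA :|: FB)) x y ->
  (y \in A -> connect (adj FA) x y) /\
  (y \in B -> connect (adj FA) x v /\ connect (adj FB) v y).
Proof.
move=> sAB /subsetP sA /subsetP sB xA.
have cut_vertex z : z \in A -> z \in B -> z = v.
  by move=> zA zB; apply/set1P/(subsetP sAB); rewrite inE zA.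
apply: (connect_invariant (P := fun y => (y \in A -> connect (adj FA) x y) /\
  (y \in B -> connect (adj FA) x v /\ connect (adj FB) v y))).
  by split=> // xB; rewrite -(cut_vertex _ xA xB).
move=> a b [PA PB] /adjP[e]; rewrite inE => /orP[eA|eB] H.
- have [aA bA] : a \in A /\ b \in A.
    by move: (sA _ eA); rewrite inE; case: H => -[<- <-] /andP[].
  have xb : connect (adj FA) x b.
    by apply: connect_trans (PA aA) (connect1 _); apply/adjP; exists e.
  by split=> // bB; rewrite -(cut_vertex _ bA bB).
- have [aB bB] : a \in B /\ b \in B.
    by move: (sB _ eB); rewrite inE; case: H => -[<- <-] /andP[].
  have [xv va] := PB aB.
  have vb : connect (adj FB) v b.
    by apply: connect_trans va (connect1 _); apply/adjP; exists e.
  by split=> // bA; rewrite (cut_vertex _ bA bB).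
Qed.

Section Glue.
Variables (A B : {set V}) (v : V).
Hypothesis sAB : A :&: B \subset [set v].

Let sBA : B :&: A \subset [set v]. Proof. by rewrite setIC. Qed.

Lemma acyclic_glue (FA FB : {set E}) : FA \subset IE A -> FB \subset IE B ->
  acyclic ends (FA :|: FB) = acyclic ends FA && acyclic ends FB.
Proof.
move=> sA sB; apply/idP/andP.
  move=> /forall_inP acF; split; apply/forall_inP => e eF; apply/negP => C;
  have /negP := acF e ltac:(by rewrite inE eF ?orbT); apply;
  (apply: connect_adj_mono C; rewrite setDUl); [exact: subsetUl | exact: subsetUr].
case=> /forall_inP acA /forall_inP acB; apply/forall_inP => e.
rewrite inE setDUl => /orP[eA|eB]; apply/negP => C.
- move: (subsetP sA e eA); rewrite inE => /andP[e1 e2].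
  have [/(_ e2) + _] := connect_adj_cut sAB (subset_trans (subsetDl _ _) sA)
                          (subset_trans (subsetDl _ _) sB) e1 C.
  exact/negP/acA.
- move: (subsetP sB e eB); rewrite inE => /andP[e1 e2]; rewrite setUC in C.
  have [/(_ e2) + _] := connect_adj_cut sBA (subset_trans (subsetDl _ _) sB)
                          (subset_trans (subsetDl _ _) sA) e1 C.
  exact/negP/acB.
Qed.

Hypotheses (vA : v \in A) (vB : v \in B).

Lemma tree_on_glue (T : {set E}) : T \subset IE A :|: IE B ->
  tree_on ends (A :|: B) T = tree_on ends A (T :&: IE A) && tree_on ends B (T :&: IE B).
Proof.
move=> sT.
have eT : T = (T :&: IE A) :|: (T :&: IE B) by rewrite -setIUr; apply/esym/setIidPl.
have sA : T :&: IE A \subset IE A := subsetIr _ _.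
have sB : T :&: IE B \subset IE B := subsetIr _ _.
have AB0 : A :|: B != set0 by apply/set0Pn; exists v; rewrite inE vA.
have sTAB : T \subset IE (A :|: B).
  by apply: subset_trans sT _; rewrite subUset !induced_edges_mono ?subsetUl ?subsetUr.
have A0 : A != set0 by apply/set0Pn; exists v.
have B0 : B != set0 by apply/set0Pn; exists v.
rewrite /tree_on AB0 A0 B0 sTAB sA sB.
rewrite [in acyclic _ T]eT acyclic_glue //.
case: (acyclic _ (T :&: IE A)) (acyclic _ (T :&: IE B)) => [] [] /=; rewrite ?andbF //.
apply/idP/andP.
- move=> /forall_inP conn.
  have connT x y : x \in A :|: B -> y \in A :|: B -> connect (adj T) x y.
    by move=> xX yX; apply/forall_inP: yX; apply: conn.
  split; apply/forall_inP => x xX; apply/forall_inP => y yX.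
  + have c : connect (adj (T :&: IE A :|: T :&: IE B)) x y.
      by rewrite -eT; apply: connT; rewrite inE ?xX ?yX.
    by case: (connect_adj_cut sAB sA sB xX c) => /(_ yX).
  + have c : connect (adj (T :&: IE B :|: T :&: IE A)) x y.
      by rewrite setUC -eT; apply: connT; rewrite inE ?xX ?yX orbT.
    by case: (connect_adj_cut sBA sB sA xX c) => /(_ yX).
- case=> /forall_inP cA /forall_inP cB.
  have cA' x y : x \in A -> y \in A -> connect (adj T) x y.
    move=> xA yA; apply: connect_adj_mono (subsetIl T (IE A)) _.
    by move/forall_inP: (cA x xA); apply.
  have cB' x y : x \in B -> y \in B -> connect (adj T) x y.
    move=> xB yB; apply: connect_adj_mono (subsetIl T (IE B)) _.
    by move/forall_inP: (cB x xB); apply.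
  apply/forall_inP => x /setUP[xA|xB]; apply/forall_inP => y /setUP[yA|yB].
  + exact: cA'.
  + exact: connect_trans (cA' _ _ xA vA) (cB' _ _ vB yB).
  + exact: connect_trans (cB' _ _ xB vB) (cA' _ _ vA yA).
  + exact: cB'.
Qed.
End Glue.

(* [two_forest_in A B v S F]: the ordered spanning 2-forest (S, F) of G restricts
   to a spanning 2-forest of G[A] and a spanning tree of G[B], and G[B] lies in
   the tree containing v. *)
Definition two_forest_in (A B : {set V}) (v : V) (S : {set V}) (F : {set E}) : bool :=
  [&& two_forest ends A (S :&: A) (F :&: IE A), tree_on ends B (F :&: IE B) &
      S :&: B == (if v \in S then B else set0)].

Lemma two_forest_in_compl (A B : {set V}) v (S : {set V}) (F : {set E}) :
  two_forest_in A B v (~: S) F = two_forest_in A B v S F.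
Proof.
suff compl S' : two_forest_in A B v S' F -> two_forest_in A B v (~: S') F.
  by apply/idP/idP => [/compl|]; [rewrite setCK | exact: compl].
case/and3P=> tA tB /eqP SB; apply/and3P; split; last first.
- rewrite inE; case: (v \in S') SB => /setP SB; apply/eqP/setP => x;
  by move: (SB x); rewrite !inE; case: (x \in S'); case: (x \in B).
- exact: tB.
- have -> : ~: S' :&: A = A :\: (S' :&: A).
    by apply/setP => x; rewrite !inE; case: (x \in S'); case: (x \in A).
  exact: two_forest_compl tA.
Qed.

Lemma two_forest_in_exclusive (A B : {set V}) v (S : {set V}) (F : {set E}) :
  two_forest_in A B v S F -> ~~ two_forest_in B A v S F.
Proof.
case/and3P=> _ _ /eqP SB; apply/negP => /and3P[/and4P[_ _ t1 t2] _ _].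
by move: SB t1 t2; case: (v \in S) => ->; rewrite ?setDv /tree_on eqxx.
Qed.

Section Separation.
Variables (A B : {set V}) (v : V).
Hypotheses (AUB : A :|: B = setT) (AIB : A :&: B = [set v]).
Hypothesis cover : forall e, e \in IE A :|: IE B.
Hypothesis disjE : forall e, ~~ ((e \in IE A) && (e \in IE B)).
Variables (R : realFieldType) (rho : V -> 'rV[R]_4) (alpha : E -> R).

Let vA : v \in A. Proof. by have := set11 v; rewrite -AIB => /setIP[]. Qed.
Let vB : v \in B. Proof. by have := set11 v; rewrite -AIB => /setIP[]. Qed.
Let memAB x : (x \in A) || (x \in B). Proof. by rewrite -in_setU AUB inE. Qed.
Let cut x : x \in A -> x \in B -> x = v.
Proof. by move=> xA xB; apply/set1P; rewrite -AIB inE xA. Qed.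

Lemma two_forest_setT_in (S : {set V}) (F : {set E}) : B \subset S ->
  two_forest ends setT S F = two_forest_in A B v S F.
Proof.
move=> /subsetP bS; have vS := bS v vB.
have sSAB : S :&: A :&: B \subset [set v].
  by apply/subsetP => x /setIP[/setIP[_ xA] xB]; rewrite (cut xA xB) set11.
have vSA : v \in S :&: A by rewrite inE vS vA.
have eC : A :\: (S :&: A) = ~: S.
  by apply/setP => x; rewrite !inE; move: (memAB x) (bS x); case_mem.
have eS : S = S :&: A :|: B.
  by apply/setP => x; rewrite !inE; move: (memAB x) (bS x); case_mem.
have sT : F :&: IE S \subset IE (S :&: A) :|: IE B.
  by apply/subsetP => e; move: (cover e); case_mem.
have tS := tree_on_glue sSAB vSA vB sT; rewrite -eS in tS.
have SA x : (x \in S) || (x \in A) by move: (memAB x) (bS x); case_mem.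
have e1 : F :&: IE S :&: IE (S :&: A) = F :&: IE A :&: IE (S :&: A).
  by apply/setP => e; case_mem.
have e2 : F :&: IE S :&: IE B = F :&: IE B.
  by apply/setP => e; move: (bS (ends e).1) (bS (ends e).2); case_mem.
have e3 : F :&: IE A :&: IE (~: S) = F :&: IE (~: S).
  by apply/setP => e; move: (SA (ends e).1) (SA (ends e).2); case_mem.
have eF : (F \subset IE S :|: IE (~: S)) =
          (F :&: IE A \subset IE (S :&: A) :|: IE (~: S)).
  apply/subsetP/subsetP => sF e; move: (sF e) (cover e);
    move: (bS (ends e).1) (bS (ends e).2); case_mem.
have SBB : S :&: B == B by apply/eqP/setIidPr/subsetP.
rewrite /two_forest_in /two_forest subsetT setTD vS eC tS e1 e2 e3 eF subsetIr SBB.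
by case: (_ \subset _); case: (tree_on _ (S :&: A) _); case: (tree_on _ B _);
  case: (tree_on _ (~: S) _).
Qed.
Lemma two_forest_in_setT (S : {set V}) (F : {set E}) :
  two_forest_in A B v S F -> two_forest ends setT S F.
Proof.
wlog vS : S / v \in S => [wlog_vS|].
  case vS: (v \in S); first exact: wlog_vS.
  rewrite -two_forest_in_compl => /wlog_vS; rewrite inE vS => /(_ isT).
  by move/two_forest_compl; rewrite setTD setCK.
move=> tf; rewrite two_forest_setT_in //.
by case/and3P: tf => _ _; rewrite vS => /eqP <-; apply: subsetIl.
Qed.

Lemma compl_sub_cut_side (S : {set V}) : v \in S -> ~: S \subset A -> B \subset S.
Proof.
move=> vS /subsetP sSA; apply/subsetP => x xB; apply/negPn/negP => xS.
have xA : x \in A by apply: sSA; rewrite inE.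
by move: xS; rewrite (cut xA xB) vS.
Qed.

(* The tree avoiding v is connected without passing through v. *)
Lemma two_forest_setT_side (S : {set V}) (F : {set E}) :
  two_forest ends setT S F -> v \in S -> (~: S \subset A) || (~: S \subset B).
Proof.
case/and4P=> _ _ _; rewrite setTD => /and4P[_ _ _ /forall_inP conn] vS.
case: (boolP (~: S \subset A)) => [//|/subsetPn[x xS xA]] /=.
apply/subsetP => y yS; apply/negPn/negP => yB.
have xB : x \in B by move: (memAB x); rewrite (negbTE xA).
have yA : y \in A by move: (memAB y); rewrite (negbTE yB) orbF.
set T := F :&: IE (~: S).
have yx : connect (adj (T :&: IE A :|: T :&: IE B)) y x.
  rewrite -setIUr (setIidPl _); first by move/forall_inP: (conn y yS); apply.
  by apply/subsetP => e _; apply: cover.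
have sAB : A :&: B \subset [set v] by rewrite AIB.
have [_ /(_ xB) [yv _]] := connect_adj_cut sAB (subsetIr T _) (subsetIr T _) yA yx.
have sTA : T :&: IE A \subset IE (~: S) := subset_trans (subsetIl _ _) (subsetIr _ _).
by move: (connect_adj_induced sTA yS yv); rewrite inE vS.
Qed.
Definition glue_forest (j : {set V} * ({set E} * {set E})) : {set V} * {set E} :=
  (j.1 :|: (if v \in j.1 then B else set0), j.2.1 :|: j.2.2).

Definition restrict_forest (i : {set V} * {set E}) : {set V} * ({set E} * {set E}) :=
  (i.1 :&: A, (i.2 :&: IE A, i.2 :&: IE B)).

Lemma restrict_glue_forest (SA : {set V}) (FA TB : {set E}) :
    SA \subset A -> FA \subset IE A -> TB \subset IE B ->
  restrict_forest (glue_forest (SA, (FA, TB))) = (SA, (FA, TB)).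
Proof.
move=> /subsetP sSA /subsetP sFA /subsetP sTB; congr (_, (_, _)); apply/setP.
- move=> x /=; case vS: (v \in SA); rewrite !inE ?orbF; last first.
    by apply/andb_idr/sSA.
  have cutS : x \in A -> x \in B -> x \in SA by move=> xA xB; rewrite (cut xA xB).
  by move: cutS (sSA x); case_mem.
- by move=> e; move: (sFA e) (sTB e) (disjE e); case_mem.
- by move=> e; move: (sFA e) (sTB e) (disjE e); case_mem.
Qed.

Lemma glue_restrict_forest (i : {set V} * {set E}) :
  two_forest_in A B v i.1 i.2 -> glue_forest (restrict_forest i) = i.
Proof.
case: i => S F /and3P[_ _ /eqP SB]; congr (_, _) => /=.
  rewrite inE vA andbT; case: (v \in S) SB => /setP SB; apply/setP => x;
  by move: (memAB x) (SB x); case_mem.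
by rewrite -setIUr; apply/setIidPl/subsetP => e _; apply: cover.
Qed.

Lemma two_forest_in_glue (SA : {set V}) (FA TB : {set E}) :
  two_forest_in A B v (glue_forest (SA, (FA, TB))).1 (glue_forest (SA, (FA, TB))).2
    && (restrict_forest (glue_forest (SA, (FA, TB))) == (SA, (FA, TB)))
  = two_forest ends A SA FA && tree_on ends B TB.
Proof.
apply/idP/andP.
  by case/andP=> + /eqP[e1 e2 e3]; rewrite /two_forest_in e1 e2 e3 => /and3P[].
case=> tf tB; have [sSA sFA] := two_forest_sub tf.
have sTB : TB \subset IE B by case/and4P: tB.
have eqi := restrict_glue_forest sSA sFA sTB.
rewrite eqi eqxx andbT; case: eqi => e1 e2 e3.
rewrite /two_forest_in e1 e2 e3 tf tB /=; apply/eqP/setP => x.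
case vS: (v \in SA); rewrite /= ?inE ?vS.
  by case: (x \in SA) (x \in B) => [] [].
have cutS : x \in SA -> x \in B -> false.
  by move=> xS xB; move: vS; rewrite -(cut (subsetP sSA x xS) xB) xS.
by move: cutS; case_mem.
Qed.

Lemma mom_glue (SA : {set V}) : SA \subset A ->
  mom rho (SA :|: (if v \in SA then B else set0)) =
  mom (fun u => if u == v then mom rho B else rho u) SA.
Proof.
move=> /subsetP sSA; rewrite /mom; case vS: (v \in SA); last first.
  by rewrite setU0; apply: eq_bigr => u uS; case: eqP => // uv; rewrite -uv uS in vS.
rewrite [in RHS](bigD1 v) //= eqxx addrC.
have eSB : SA :|: B =i [predU SA :\ v & B].
  by move=> u; rewrite !inE; case: eqP => [->|_] /=; rewrite ?vS ?vB ?orbT.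
rewrite (eq_bigl _ _ eSB) bigU /=; last first.
  rewrite -setI_eq0; apply/eqP/setP => x; rewrite !inE.
  case: eqP => [|xv] //=; case xS: (x \in SA) => //=; apply/negP => xB.
  exact/xv/(cut (sSA x xS) xB).
congr (_ + _); apply: eq_big => u; first by rewrite !inE andbC.
by rewrite !inE => /andP[/negbTE -> _].
Qed.

Lemma prod_alpha_glue (FA TB : {set E}) : FA \subset IE A -> TB \subset IE B ->
  \prod_(e in IE setT :\: (FA :|: TB)) alpha e =
  \prod_(e in IE A :\: FA) alpha e * \prod_(e in IE B :\: TB) alpha e.
Proof.
move=> /subsetP sFA /subsetP sTB; rewrite -bigU /=.
  by apply: eq_bigl => e; move: (sFA e) (sTB e) (disjE e) (cover e); case_mem.
by rewrite -setI_eq0; apply/eqP/setP => e; move: (disjE e); case_mem.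
Qed.

Lemma sum_two_forest_in :
  \sum_(S : {set V}) \sum_(F : {set E} | two_forest_in A B v S F)
     msq (mom rho S) * \prod_(e in IE setT :\: F) alpha e
  = (\sum_(S : {set V}) \sum_(F : {set E} | two_forest ends A S F)
       msq (mom (fun u => if u == v then mom rho B else rho u) S)
       * \prod_(e in IE A :\: F) alpha e) * psi ends B alpha.
Proof.
rewrite pair_big_dep (reindex_onto glue_forest restrict_forest); last first.
  by case=> S F /= tf; apply: glue_restrict_forest.
rewrite /psi big_distrl /=.
under [RHS]eq_bigr do rewrite big_distrlr /= pair_big_dep.
rewrite [RHS]pair_big_dep; apply: eq_big => -[SA [FA TB]] /=.
  exact: two_forest_in_glue.
move=> cond; have /andP[tf tB] : two_forest ends A SA FA && tree_on ends B TB.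
  by rewrite -two_forest_in_glue.
have [sSA sFA] := two_forest_sub tf.
have sTB : TB \subset IE B by case/and4P: tB.
by rewrite mom_glue // prod_alpha_glue // mulrA.
Qed.
End Separation.

Section Split.
Variables (A B : {set V}) (v : V).
Hypotheses (AUB : A :|: B = setT) (AIB : A :&: B = [set v]).
Hypothesis cover : forall e, e \in IE A :|: IE B.

Let BUA : B :|: A = setT. Proof. by rewrite setUC. Qed.
Let BIA : B :&: A = [set v]. Proof. by rewrite setIC. Qed.
Let cover' e : e \in IE B :|: IE A. Proof. by rewrite setUC. Qed.

Lemma two_forest_setT_split (S : {set V}) (F : {set E}) :
  two_forest ends setT S F = two_forest_in A B v S F || two_forest_in B A v S F.
Proof.
apply/idP/orP => [|[]]; last 2 first.
- exact: (two_forest_in_setT AUB AIB cover).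
- exact: (two_forest_in_setT BUA BIA cover').
wlog vS : S / v \in S => [wlog_vS tf|tf].
  case vS: (v \in S); first exact: wlog_vS.
  rewrite -(two_forest_in_compl A) -(two_forest_in_compl B).
  by apply: wlog_vS; rewrite ?inE ?vS // -setTD; apply: two_forest_compl.
case/orP: (two_forest_setT_side AUB AIB cover tf vS) => sS; [left|right].
- by rewrite -two_forest_setT_in // (compl_sub_cut_side AIB).
- by rewrite -two_forest_setT_in // (compl_sub_cut_side BIA).
Qed.

Lemma sum_two_forest_setT_split (R : zmodType) (f : {set V} -> {set E} -> R) :
  \sum_(S : {set V}) \sum_(F : {set E} | two_forest ends setT S F) f S F
  = \sum_(S : {set V}) \sum_(F : {set E} | two_forest_in A B v S F) f S F
    + \sum_(S : {set V}) \sum_(F : {set E} | two_forest_in B A v S F) f S F.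
Proof.
rewrite -big_split; apply: eq_bigr => S _.
rewrite (bigID (two_forest_in A B v S)) /=; congr (_ + _); apply: eq_bigl => F.
  by rewrite two_forest_setT_split; case: (two_forest_in A B v S F); rewrite ?andbF.
rewrite two_forest_setT_split; have := @two_forest_in_exclusive B A v S F.
by case: (two_forest_in A B v S F); case: (two_forest_in B A v S F) => // /(_ isT).
Qed.
End Split.

End Graph.

Lemma sum_support_pair (R : zmodType) (T : finType) (f : T -> R) (X Y : {set T}) a b :
  (forall u, u \notin X -> f u = 0) -> a != b -> X :&: Y = [set a; b] ->
  \sum_(u in Y) f u = f a + f b.
Proof.
move=> f0 ab XY; rewrite (bigID (mem X)) /= [X in _ + X]big1 ?addr0; last first.
  by move=> u /andP[_ /f0].
rewrite (eq_bigl (fun u => u \in X :&: Y)); last by move=> u; rewrite inE andbC.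
by rewrite XY big_setU1 /= ?big_set1 // inE.
Qed.

Theorem mainTheorem10 (R : realFieldType) (V E : finType) (ends : E -> V * V)
    (alpha m : E -> R) (rho : V -> 'rV[R]_4)
    (x1 x2 x3 x4 v : V) (A B : {set V}) :
  (forall e, (ends e).1 != (ends e).2) ->
  (forall e, m e = 0) ->
  uniq [:: x1; x2; x3; x4] ->
  (forall u, u \notin [set x1; x2; x3; x4] -> rho u = 0) ->
  \sum_(u : V) rho u = 0 ->
  msq (rho x1) = 0 -> msq (rho x2) = 0 -> msq (rho x3) = 0 -> msq (rho x4) = 0 ->
  one_separation ends A B ->
  A :&: B = [set v] ->
  [set x1; x2; x3; x4] :&: (A :\ v) = [set x1; x2] ->
  [set x1; x2; x3; x4] :&: (B :\ v) = [set x3; x4] ->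
  let rhoA := fun u => if u == v then rho x3 + rho x4 else rho u in
  let rhoB := fun u => if u == v then rho x1 + rho x2 else rho u in
  phi ends setT rho alpha m
  = phi ends A rhoA alpha m * psi ends B alpha
    + phi ends B rhoB alpha m * psi ends A alpha.
Proof.
move=> loopless m0 uniqX rho0 _ _ _ _ _ sep AIB XA XB rhoA rhoB.
set X := [set x1; x2; x3; x4] in rho0 XA XB.
have AUB : A :|: B = setT by case/andP: sep => /andP[/eqP].
have BUA : B :|: A = setT by rewrite setUC.
have BIA : B :&: A = [set v] by rewrite setIC.
have cover := one_separation_cover sep.
have cover' e : e \in induced_edges ends B :|: induced_edges ends A by rewrite setUC.
have disjE := induced_edges_cut_disjoint loopless AIB.
have disjE' := induced_edges_cut_disjoint loopless BIA.
move: uniqX; rewrite /= !inE !negb_or => /and4P[/and3P[x12 _ _] /andP[_ _] x34 _].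
have vX : v \notin X.
  have -> : X = X :&: (A :\ v) :|: X :&: (B :\ v).
    by rewrite XA XB; apply/setP => x; rewrite !inE !orbA.
  by rewrite !inE eqxx !andbF.
have XIDv (Y : {set V}) : X :&: Y = X :&: (Y :\ v).
  by apply/setP => x; rewrite !in_setI in_setD1; case: eqP => [->|_]; rewrite ?(negbTE vX).
have momA : mom rho A = rho x1 + rho x2 by apply: (sum_support_pair rho0 x12); rewrite XIDv.
have momB : mom rho B = rho x3 + rho x4 by apply: (sum_support_pair rho0 x34); rewrite XIDv.
have massless (F : {set E}) : \sum_(e in F) alpha e * m e ^+ 2 = 0.
  by apply: big1 => e _; rewrite m0 expr0n mulr0.
rewrite /phi !massless !mulr0 !addr0 (sum_two_forest_setT_split AUB AIB cover).
rewrite (sum_two_forest_in AUB AIB cover disjE) (sum_two_forest_in BUA BIA cover' disjE').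
by rewrite momA momB mulrDr !mulrA.
Qed.
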